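(* Let $2\le k\le n$ be integers, $V=[n]$, and $\mathbf{d}\in\mathbb{Z}^n$. (a) For $a,b\in V$, if $\mathbf{d}-\mathbf{e}_a$ and $\mathbf{d}-\mathbf{e}_b$ are $k$-graphical, then $$R_{ab}(\mathbf{d})=\frac{d_a}{d_b}\cdot\frac{1-B(a,b,\mathbf{d}-\mathbf{e}_b)}{1-B(b,a,\mathbf{d}-\mathbf{e}_a)},$$ provided that $B(b,a,\mathbf{d}-\mathbf{e}_a)<1$, where for $i,j\in\{a,b\}$ and a sequence $\mathbf{d}'$, $$B(i,j,\mathbf{d}')=\frac{1}{d_i}\left(\sum_{K\in\binom{V\setminus\{a,b\}}{k-2}}P_{K\cup\{i,j\}}(\mathbf{d}')+\sum_{K\in\binom{V\setminus\{a,b\}}{k-1}}Y_{i,K,j}(\mathbf{d}')\right).$$ (b) Let $A\in\binom{V}{k-1}$ and $v\in V\setminus A$. Then $$P_{A\cup\{v\}}(\mathbf{d})=d_v\left(\sum_{B\in\binom{V\setminus\{v\}}{k-1}}R_{B,A}(\mathbf{d}-\mathbf{e}_v)\,\frac{1-P_{B\cup\{v\}}(\mathbf{d}-\mathbf{e}_{B\cup\{v\}})}{1-P_{A\cup\{v\}}(\mathbf{d}-\mathbf{e}_{A\cup\{v\}})}\right)^{-1},$$ provided that $P_{A\cup\{v\}}(\mathbf{d})>0$ and, for every $B\in\binom{V\setminus\{v\}}{k-1}$ with $A$-consistent ordering $(a_1,\dots,a_{k-1})$, $(b_1,\dots,b_{k-1})$ of $(A,B)$, the sequences $\mathbf{d}-\mathbf{e}_v-\mathbf{e}_{\{b_1,\dots,b_j,a_{j+1},\dots,a_{k-1}\}}$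 are $k$-graphical for all $j\in\{0,1,\dots,k-1\}$. (c) For $K\in\binom{V}{k-1}$ and distinct $a,b\in V\setminus K$, if $P_{K\cup\{a\}}(\mathbf{d}-\mathbf{e}_{K\cup\{a\}})<1$, then $$Y_{a,K,b}(\mathbf{d})=\frac{P_{K\cup\{a\}}(\mathbf{d})}{1-P_{K\cup\{a\}}(\mathbf{d}-\mathbf{e}_{K\cup\{a\}})}\left(P_{K\cup\{b\}}(\mathbf{d}-\mathbf{e}_{K\cup\{a\}})-Y_{a,K,b}(\mathbf{d}-\mathbf{e}_{K\cup\{a\}})\right).$$
   Context: A $k$-graph on $V=[n]$ is a set of $k$-element subsets of $V$. $\mathcal{N}(\mathbf{d})$ is the number of $k$-graphs on $V$ with degree sequence $\mathbf{d}$; $\mathbf{d}$ is $k$-graphical if $\mathcal{N}(\mathbf{d})>0$. $\mathbf{e}_a$ is the $a$-th standard basis vector and $\mathbf{e}_S=\sum_{a\in S}\mathbf{e}_a$ for $S\subseteq V$. For $a,b\in V$ with $\mathcal{N}(\mathbf{d}-\mathbf{e}_b)>0$, $R_{ab}(\mathbf{d})=\mathcal{N}(\mathbf{d}-\mathbf{e}_a)/\mathcal{N}(\mathbf{d}-\mathbf{e}_b)$. For $k$-graphical $\mathbf{d}$ and $S\subseteq V$, $P_S(\mathbf{d})$ is the probability that a uniformly random $k$-graph with degree sequence $\mathbf{d}$ contains $S$ as an edge (so $P_S=0$ if $|S|\ne k$); for $K\in\binom V{k-1}$, $a,b\in V\setminus K$, $Y_{a,K,b}(\mathbf{d})$ is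 the probability that it contains both $K\cup\{a\}$ and $K\cup\{b\}$ when $a\neq b$, and $Y_{a,K,a}(\mathbf{d})=0$. Identities are asserted whenever all quantities in them are defined. For $A,B\in\binom V{k-1}$, the $A$-consistent ordering of $(A,B)$ is the ordering $(a_1,\dots,a_{k-1})$ of $A$ and $(b_1,\dots,b_{k-1})$ of $B$ such that $a_1<\dots<a_{k-1}$, $b_i=a_i$ whenever $b_i\in A$, and the elements $b_i\notin A$ appear in increasing order of $i$. Then $R_{B,A}(\mathbf{d})=\prod_{j=1}^{k-1}R_{b_ja_j}\big(\mathbf{d}-\mathbf{e}_{\{b_1,\dots,b_{j-1},a_{j+1},\dots,a_{k-1}\}}\big)$. *)

From mathcomp Require Import all_boot all_order all_algebra.
Set Implicit Arguments. Unset Strict Implicit. Unset Printing Implicit Defensive.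
Import Order.TTheory GRing.Theory Num.Theory.
Local Open Scope ring_scope.

Section KGraphs.
Variables (n k : nat).

Definition kgraph (G : {set {set 'I_n}}) : bool := [forall e in G, #|e| == k].

Definition deg (G : {set {set 'I_n}}) (a : 'I_n) : nat := #|[set e in G | a \in e]|.

Definition has_degs (G : {set {set 'I_n}}) (d : 'I_n -> int) : bool :=
  [forall a, (deg G a)%:Z == d a].

Definition kgraphs (d : 'I_n -> int) : {set {set {set 'I_n}}} :=
  [set G | kgraph G && has_degs G d].

Definition Ncount (d : 'I_n -> int) : nat := #|kgraphs d|.

Definition kgraphical (d : 'I_n -> int) : bool := (0 < Ncount d)%N.

(* d - e_S  (e_S = sum of standard basis vectors of S); e_a = e_{[set a]} *)
Definition dminus (d : 'I_n -> int) (S : {set 'I_n}) : 'I_n -> int :=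
  fun x => d x - (x \in S)%:Z.

Definition Rab (d : 'I_n -> int) (a b : 'I_n) : rat :=
  (Ncount (dminus d [set a]))%:R / (Ncount (dminus d [set b]))%:R.

Definition Pedge (d : 'I_n -> int) (S : {set 'I_n}) : rat :=
  #|[set G in kgraphs d | S \in G]|%:R / (Ncount d)%:R.

Definition Ypair (d : 'I_n -> int) (a : 'I_n) (K : {set 'I_n}) (b : 'I_n) : rat :=
  if a == b then 0 else
  #|[set G in kgraphs d | (a |: K \in G) && (b |: K \in G)]|%:R / (Ncount d)%:R.

(* B(i,j,d') of part (a), relative to the pair a,b and the sequence d *)
Definition Bq (d : 'I_n -> int) (a b i j : 'I_n) (d' : 'I_n -> int) : rat :=
  ((d i)%:~R)^-1 *
  (\sum_(K : {set 'I_n} | (K \subset ~: [set a; b]) && (#|K| == (k - 2)%N))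
      Pedge d' (i |: (j |: K))
   + \sum_(K : {set 'I_n} | (K \subset ~: [set a; b]) && (#|K| == (k - 1)%N))
      Ypair d' i K j).

Definition sort_ord (s : seq 'I_n) : seq 'I_n :=
  sort (fun x y : 'I_n => (nat_of_ord x <= nat_of_ord y)%N) s.

Definition aord (A : {set 'I_n}) : seq 'I_n := sort_ord (enum A).

Fixpoint fill (B : {set 'I_n}) (as_ news : seq 'I_n) : seq 'I_n :=
  match as_ with
  | [::] => [::]
  | a :: as' =>
      if a \in B then a :: fill B as' news
      else match news with
           | [::] => a :: fill B as' [::]
           | b :: news' => b :: fill B as' news'
           end
  end.

Definition bord (A B : {set 'I_n}) : seq 'I_n :=
  fill B (aord A) (sort_ord (enum (B :\: A))).

Definition cset (A B : {set 'I_n}) (j : nat) : {set 'I_n} :=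
  [set x in take j (bord A B) ++ drop j (aord A)].

(* R_{B,A}(d) = prod_{j=1}^{k-1} R_{b_j a_j}(d - e_{b_1..b_{j-1},a_{j+1}..a_{k-1}})
   (0-based index p.1 = j-1) *)
Definition RBA (d : 'I_n -> int) (B A : {set 'I_n}) : rat :=
  \prod_(p <- zip (iota 0 (size (aord A))) (zip (bord A B) (aord A)))
     Rab (dminus d [set x in take p.1 (bord A B) ++ drop p.1.+1 (aord A)])
         p.2.1 p.2.2.

End KGraphs.

From mathcomp Require Import all_boot all_order all_algebra.
From mathcomp Require Import zify ring.
Set Implicit Arguments. Unset Strict Implicit. Unset Printing Implicit Defensive.
Import Order.TTheory GRing.Theory Num.Theory.
Local Open Scope ring_scope.

(* Everything is double counting over the sets [kgraphs k d].  Deleting an edge S is a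
   bijection from the graphs of degree sequence d containing S onto the graphs of degree
   sequence d - e_S avoiding S; with it, (c) is a direct computation.
   For (a), count the edges through a in the graphs of degree sequence d - e_b: their
   number is N(d - e_b) d_a.  Edges through a and b, and edges K+a with K+b also present,
   account for N(d - e_b) d_a B(a,b,d - e_b); the remaining ones, K+a present and K+b
   absent, correspond after deleting K+a to graphs of degree sequence d - e_(K+a+b) avoiding
   K+a and K+b.  That count is symmetric in a and b, whence
   N(d - e_b) d_a (1 - B(a,b,d - e_b)) = N(d - e_a) d_b (1 - B(b,a,d - e_a)).
   For (b), consecutive sets of an A-consistent ordering differ by trading a_j for b_j, so
   R_(B,A)(d - e_v) telescopes to N(d - e_(B+v)) / N(d - e_(A+v)); each summand then becomes
   #{G | B+v in G} / #{G | A+v in G}, and the numerators add up to N(d) d_v. *)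

Lemma card_sepC (T : finType) (A : {set T}) (q : pred T) :
  (#|[set x in A | q x]| + #|[set x in A | ~~ q x]|)%N = #|A|.
Proof.
rewrite -(cardsID [set x | q x] A); congr (_ + _)%N;
by apply: eq_card => x; rewrite !inE andbC.
Qed.

Lemma card_sepID (T : finType) (A : {set T}) (p q : pred T) :
  (#|[set x in A | p x && q x]| + #|[set x in A | p x && ~~ q x]|)%N =
  #|[set x in A | p x]|.
Proof.
rewrite -(card_sepC [set x in A | p x] q); congr (_ + _)%N;
by apply: eq_card => x; rewrite !inE; case: (x \in A) (p x) (q x) => [] [] [].
Qed.

Lemma card_sepAC (T : finType) (A : {set T}) (p q : pred T) :
  #|[set x in A | p x && q x]| = #|[set x in A | q x && p x]|.
Proof. by apply: eq_card => x; rewrite !inE [p x && _]andbC. Qed.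

Lemma double_count (T U : finType) (X : {set T}) (P : pred U) (R : T -> U -> bool) :
  (\sum_(x in X) #|[set y | P y && R x y]| = \sum_(y | P y) #|[set x in X | R x y]|)%N.
Proof.
under eq_bigr do rewrite -sum1dep_card big_mkcondr.
rewrite exchange_big; apply: eq_bigr => y _.
by rewrite -sum1dep_card big_mkcondr.
Qed.

Lemma leq_index_drop (T : eqType) (s : seq T) j x :
  uniq s -> x \in drop j s -> (j <= index x s)%N.
Proof.
move=> us xd; rewrite leqNgt -in_take ?(mem_drop xd) //.
by move: us; rewrite -{1}(cat_take_drop j s) cat_uniq => /and3P[_ /hasPn/(_ x xd)].
Qed.

Lemma setU1_eqF (T : finType) (A : {set T}) x y :
  x != y -> y \notin A -> (y |: A == x |: A) = false.
Proof.
move=> xy yA; apply/eqP => E; have : y \in x |: A by rewrite -E setU11.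
by rewrite in_setU1 eq_sym (negbTE xy) (negbTE yA).
Qed.

Section KGraphs.
Variables (n k : nat).
Implicit Types (G : {set {set 'I_n}}) (d : 'I_n -> int) (S T U K : {set 'I_n}) (a b : 'I_n).

Lemma kgraphP G : reflect {in G, forall e : {set 'I_n}, #|e| = k} (kgraph k G).
Proof. by apply: (iffP forall_inP) => H e /H /eqP. Qed.

Lemma has_degsP G d : reflect (forall a, (deg G a)%:Z = d a) (has_degs G d).
Proof. by apply: (iffP forallP) => H a; apply/eqP. Qed.

Lemma kgraphs_deg d G : G \in kgraphs k d -> forall a, (deg G a)%:Z = d a.
Proof. by rewrite inE => /andP[_ /has_degsP]. Qed.

Lemma kgraphs_kgraph d G : G \in kgraphs k d -> kgraph k G.
Proof. by rewrite inE => /andP[]. Qed.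

Lemma kgraphs_deg_gt0 d G S a : G \in kgraphs k d -> S \in G -> a \in S -> 0 < d a.
Proof.
move=> /kgraphs_deg <- SG aS; rewrite ltz_nat; apply/card_gt0P.
by exists S; rewrite inE SG.
Qed.

Lemma eq_kgraphs d1 d2 : d1 =1 d2 -> kgraphs k d1 = kgraphs k d2.
Proof.
move=> E; apply/setP => G; rewrite !inE; congr (_ && _).
by apply/has_degsP/has_degsP => H a; rewrite H ?E.
Qed.

Lemma dminusD d S T :
  [disjoint S & T] -> dminus (dminus d S) T =1 dminus d (S :|: T).
Proof.
move=> dST x; rewrite /dminus in_setU.
case: (boolP (x \in S)) => [xS | _] /=; last by rewrite subr0.
by rewrite (disjointFr dST xS) subr0.
Qed.

Lemma deg_setU1 G S x : S \notin G -> deg (S |: G) x = (deg G x + (x \in S))%N.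
Proof.
move=> SG; rewrite /deg; case: (boolP (x \in S)) => xS /=.
  rewrite (_ : [set e in S |: G | x \in e] = S |: [set e in G | x \in e]).
    by rewrite cardsU1 inE (negbTE SG) addnC.
  by apply/setP => e; rewrite !inE; case: eqP => // ->.
rewrite addn0; apply: eq_card => e; rewrite !inE.
by case: eqP => [->|]; rewrite ?(negbTE xS) ?andbF.
Qed.

Lemma Ncount_dminusD d S T :
  [disjoint S & T] -> Ncount k (dminus (dminus d S) T) = Ncount k (dminus d (S :|: T)).
Proof. by move=> ST; rewrite /Ncount (eq_kgraphs (dminusD d ST)). Qed.

Lemma kgraph_setU1 G S : #|S| = k -> kgraph k G -> kgraph k (S |: G).
Proof. by move=> hS /kgraphP kG; apply/kgraphP => e /setU1P[->|/kG]. Qed.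

Lemma kgraph_setD1 G S : kgraph k G -> kgraph k (G :\ S).
Proof. by move=> /kgraphP kG; apply/kgraphP => e /setD1P[_ /kG]. Qed.

Lemma card_kgraphs_with_edge d S (Q : pred {set {set 'I_n}}) : #|S| = k ->
  #|[set G in kgraphs k d | (S \in G) && Q G]| =
  #|[set G in kgraphs k (dminus d S) | (S \notin G) && Q (S |: G)]|.
Proof.
move=> hS; set D := [set G in kgraphs k (dminus d S) | _].
have inj_add : {in D &, injective (fun G => S |: G)}.
  move=> G1 G2; rewrite !inE => /and3P[_ SG1 _] /and3P[_ SG2 _] E.
  by rewrite -(setU1K SG1) -(setU1K SG2) E.
rewrite -(card_in_imset inj_add); apply: eq_card => G; apply/idP/imsetP.
  rewrite !inE => /andP[/andP[kG /has_degsP dG] /andP[SG QG]].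
  exists (G :\ S); last by rewrite setD1K.
  rewrite !inE setD1K // QG eqxx kgraph_setD1 //= andbT.
  apply/has_degsP => x; rewrite /dminus -dG -{2}(setD1K SG).
  by rewrite deg_setU1 ?setD11 // PoszD addrK.
move=> [G']; rewrite !inE => /andP[/andP[kG /has_degsP dG] /andP[SG QG]] ->.
rewrite QG setU11 kgraph_setU1 //= andbT; apply/has_degsP => x.
by rewrite deg_setU1 // PoszD dG /dminus subrK.
Qed.

Lemma card_kgraphs_edge d S : #|S| = k ->
  #|[set G in kgraphs k d | S \in G]| =
  #|[set G in kgraphs k (dminus d S) | S \notin G]|.
Proof.
move=> hS; transitivity #|[set G in kgraphs k d | (S \in G) && predT G]|.
  by apply: eq_card => G; rewrite !inE andbT.
by rewrite card_kgraphs_with_edge //; apply: eq_card => G; rewrite !inE andbT.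
Qed.

Lemma one_sub_Pedge_dminus d S : #|S| = k -> kgraphical k (dminus d S) ->
  1 - Pedge k (dminus d S) S =
  #|[set G in kgraphs k d | S \in G]|%:R / (Ncount k (dminus d S))%:R.
Proof.
move=> hS gd; have N0 : (Ncount k (dminus d S))%:R != 0 :> rat.
  by rewrite pnatr_eq0 -lt0n.
rewrite card_kgraphs_edge // /Pedge -{1}(divff N0) -mulrBl; congr (_ / _).
by rewrite /Ncount -(card_sepC _ (fun G => S \in G)) natrD addrAC subrr add0r.
Qed.

Lemma Pedge_sub_Ypair d a b K : a != b ->
  Pedge k d (b |: K) - Ypair k d a K b =
  #|[set G in kgraphs k d | (a |: K \notin G) && (b |: K \in G)]|%:R / (Ncount k d)%:R.
Proof.
move=> ab; rewrite /Pedge /Ypair (negbTE ab) -mulrBl; congr (_ / _).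
rewrite -(card_sepID _ (fun G => b |: K \in G) (fun G => a |: K \in G)).
by rewrite !(card_sepAC _ (fun G => b |: K \in G)) natrD addrAC subrr add0r.
Qed.

Lemma Ypair_recurrence d K a b : (0 < k)%N ->
  #|K| = (k - 1)%N -> a \notin K -> b \notin K -> a != b ->
  kgraphical k d -> kgraphical k (dminus d (a |: K)) ->
  Pedge k (dminus d (a |: K)) (a |: K) < 1 ->
  Ypair k d a K b =
    Pedge k d (a |: K) / (1 - Pedge k (dminus d (a |: K)) (a |: K)) *
    (Pedge k (dminus d (a |: K)) (b |: K) - Ypair k (dminus d (a |: K)) a K b).
Proof.
move=> k_gt0 hK aK bK ab gd gd' hP.
have hS : #|a |: K| = k by rewrite cardsU1 aK hK; lia.
rewrite -subr_gt0 one_sub_Pedge_dminus // in hP.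
rewrite Pedge_sub_Ypair // one_sub_Pedge_dminus // /Ypair (negbTE ab) /Pedge.
rewrite (card_kgraphs_with_edge d (fun G => b |: K \in G) hS).
under eq_finset do rewrite in_setU1 setU1_eqF //.
set c := #|[set G in kgraphs k d | _ \in G]| in hP *.
have c0 : c%:R != 0 :> rat by apply: contraTneq hP => ->; rewrite mul0r ltxx.
have N0 : (Ncount k d)%:R != 0 :> rat by rewrite pnatr_eq0 -lt0n.
have N'0 : (Ncount k (dminus d (a |: K)))%:R != 0 :> rat by rewrite pnatr_eq0 -lt0n.
by field; rewrite c0 N0 N'0.
Qed.

Lemma card_edges_link G U T : kgraph k G -> [disjoint U & T] ->
  #|[set e in G | (U \subset e) && (e \subset ~: T)]| =
  #|[set K : {set 'I_n} | [&& K \subset ~: (U :|: T), #|K| == (k - #|U|)%N & U :|: K \in G]]|.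
Proof.
move=> /kgraphP kG UT; set L := (X in _ = #|X|).
have UKU : {in L, cancel (fun K => U :|: K) (fun e => e :\: U)}.
  move=> K; rewrite inE setCU subsetI => /andP[/andP[KU _] _].
  by rewrite setDUl setDv set0U; apply/setDidPl; rewrite disjoints_subset.
rewrite -[RHS](card_in_imset (can_in_inj UKU)); apply: eq_card => e.
apply/idP/imsetP => [|[K]].
  rewrite !inE => /and3P[eG Ue eT]; have UeU : U :|: (e :\: U) = e.
    by rewrite setDE setUIr setUCr setIT; apply/setUidPr.
  exists (e :\: U); last by rewrite UeU.
  rewrite !inE UeU eG cardsD (setIidPr Ue) kG // eqxx andbT setCU subsetI.
  by rewrite setDE subsetIr (subset_trans _ eT) ?subsetIl.
rewrite !inE => /and3P[KUT _ UKG] ->; rewrite UKG subsetUl subUset -disjoints_subset UT.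
by apply: subset_trans KUT _; rewrite setCU subsetIr.
Qed.

Lemma deg_link G v : kgraph k G ->
  deg G v = #|[set B : {set 'I_n} |
                (B \subset ~: [set v]) && (#|B| == (k - 1)%N) && (v |: B \in G)]|.
Proof.
move=> kG; have v0 : [disjoint [set v] & set0] by rewrite disjoints_subset setC0 subsetT.
transitivity #|[set e in G | ([set v] \subset e) && (e \subset ~: set0)]|.
  by apply: eq_card => e; rewrite !inE sub1set setC0 subsetT andbT.
by rewrite card_edges_link // setU0 cards1; apply: eq_card => B; rewrite !inE andbA.
Qed.

Lemma deg_link_pair G a b : kgraph k G -> a != b ->
  deg G a =
  (#|[set K : {set 'I_n} | (K \subset ~: [set a; b]) && (#|K| == (k - 2)%N)
                           && (a |: (b |: K) \in G)]|
   + #|[set K : {set 'I_n} | (K \subset ~: [set a; b]) && (#|K| == (k - 1)%N)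
                           && (a |: K \in G)]|)%N.
Proof.
move=> kG ab; rewrite /deg -(card_sepID _ _ (fun e : {set 'I_n} => b \in e)); congr (_ + _)%N.
  have ab0 : [disjoint [set a; b] & set0] by rewrite disjoints_subset setC0 subsetT.
  transitivity #|[set e in G | ([set a; b] \subset e) && (e \subset ~: set0)]|.
    by apply: eq_card => e; rewrite !inE setC0 subsetT andbT subUset !sub1set.
  rewrite card_edges_link // setU0 cards2 ab.
  by apply: eq_card => K; rewrite !inE andbA setUA.
have ab1 : [disjoint [set a] & [set b]] by rewrite disjoints1 inE.
transitivity #|[set e in G | ([set a] \subset e) && (e \subset ~: [set b])]|.
  by apply: eq_card => e; rewrite !inE sub1set subsetC sub1set inE.
by rewrite card_edges_link // cards1; apply: eq_card => K; rewrite !inE andbA.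
Qed.

Lemma sum_deg_kgraphs d a :
  (\sum_(G in kgraphs k d) deg G a)%:R = (Ncount k d)%:R * (d a)%:~R :> rat.
Proof.
rewrite natr_sum (eq_bigr (fun=> (d a)%:~R)) => [|G /kgraphs_deg <-] //.
by rewrite sumr_const mulr_natl.
Qed.

Definition nswitch d a b K : nat :=
  #|[set G in kgraphs k (dminus d [set b]) | (a |: K \in G) && (b |: K \notin G)]|.

Lemma nswitchE d a b K : (0 < k)%N ->
  #|K| = (k - 1)%N -> a \notin K -> b \notin K -> a != b ->
  nswitch d a b K =
  #|[set G in kgraphs k (dminus d (a |: (b |: K))) |
       (a |: K \notin G) && (b |: K \notin G)]|.
Proof.
move=> k_gt0 hK aK bK ab; have haK : #|a |: K| = k by rewrite cardsU1 aK hK; lia.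
rewrite /nswitch card_kgraphs_with_edge // (eq_kgraphs (dminusD _ _)); last first.
  by rewrite disjoints1 in_setU1 negb_or eq_sym ab.
by rewrite (setUCA [set b]); apply: eq_card => G; rewrite !inE setU1_eqF.
Qed.

Lemma nswitchC d a b K : (0 < k)%N ->
  #|K| = (k - 1)%N -> a \notin K -> b \notin K -> a != b ->
  nswitch d a b K = nswitch d b a K.
Proof.
move=> k_gt0 hK aK bK ab; have ba : b != a by rewrite eq_sym.
rewrite !nswitchE // (setUCA [set b]).
by apply: eq_card => G; rewrite !inE [(_ \notin G) && _]andbC.
Qed.

Lemma sum_nswitch d a b :
  a != b -> kgraphical k (dminus d [set b]) -> (d a)%:~R != 0 :> rat ->
  (\sum_(K : {set 'I_n} | (K \subset ~: [set a; b]) && (#|K| == (k - 1)%N))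
     nswitch d a b K)%:R =
  (Ncount k (dminus d [set b]))%:R * (d a)%:~R * (1 - Bq k d a b a b (dminus d [set b])).
Proof.
move=> ab gd da0; set d' := dminus d [set b]; set X := kgraphs k d'.
have N0 : (Ncount k d')%:R != 0 :> rat by rewrite pnatr_eq0 -lt0n.
have d'a : d' a = d a by rewrite /d' /dminus inE (negbTE ab) subr0.
have := sum_deg_kgraphs d' a; rewrite d'a -/X.
under eq_bigr => G GX do rewrite (deg_link_pair (kgraphs_kgraph GX) ab).
rewrite big_split /= !double_count.
under [Y in (_ + Y)%N]eq_bigr => K _ do rewrite -(card_sepID X _ (fun G => b |: K \in G)).
rewrite big_split /= !natrD => degs.
rewrite /Bq /Pedge /Ypair (negbTE ab) -/X -!mulr_suml -!natr_sum.
rewrite /nswitch -/d' -/X mulrBr mulr1 -[X in X - _]degs.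
by field; rewrite N0 da0.
Qed.

Lemma BqC d a b i j d' : Bq k d b a i j d' = Bq k d a b i j d'.
Proof. by rewrite /Bq (setUC [set b]). Qed.

Lemma kgraphical_dminus1_gt0 d a : kgraphical k (dminus d [set a]) -> 0 < d a.
Proof.
by case/card_gt0P => G /kgraphs_deg/(_ a); rewrite /dminus set11; lia.
Qed.

Lemma Rab_Bq d a b : (0 < k)%N ->
  kgraphical k (dminus d [set a]) -> kgraphical k (dminus d [set b]) ->
  Bq k d a b b a (dminus d [set a]) < 1 ->
  Rab k d a b =
    (d a)%:~R / (d b)%:~R *
    ((1 - Bq k d a b a b (dminus d [set b])) / (1 - Bq k d a b b a (dminus d [set a]))).
Proof.
move=> k_gt0 ga gb hB.
have da0 : (d a)%:~R != 0 :> rat by rewrite intr_eq0 gt_eqF ?kgraphical_dminus1_gt0.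
have db0 : (d b)%:~R != 0 :> rat by rewrite intr_eq0 gt_eqF ?kgraphical_dminus1_gt0.
have B0 : 1 - Bq k d a b b a (dminus d [set a]) != 0 by rewrite subr_eq0 eq_sym lt_eqF.
have Nb0 : (Ncount k (dminus d [set b]))%:R != 0 :> rat by rewrite pnatr_eq0 -lt0n.
rewrite /Rab; have [eq_ab|ab] := eqVneq a b.
  by subst b; field; rewrite Nb0 da0 B0.
have switch : \sum_(K : {set 'I_n} | (K \subset ~: [set a; b]) && (#|K| == (k - 1)%N))
                 nswitch d a b K =
              \sum_(K : {set 'I_n} | (K \subset ~: [set b; a]) && (#|K| == (k - 1)%N))
                 nswitch d b a K.
  rewrite (setUC [set b]); apply: eq_bigr => K /andP[+ /eqP hK].
  by rewrite subsetC subUset !sub1set !inE => /andP[aK bK]; apply: nswitchC.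
have ba : b != a by rewrite eq_sym.
have := sum_nswitch ab gb da0; rewrite switch (sum_nswitch ba ga db0) BqC => E.
have -> : (Ncount k (dminus d [set a]))%:R =
          (Ncount k (dminus d [set b]))%:R * (d a)%:~R * (1 - Bq k d a b a b (dminus d [set b]))
          / ((d b)%:~R * (1 - Bq k d a b b a (dminus d [set a]))) :> rat.
  by rewrite -E; field; rewrite db0 B0.
by field; rewrite Nb0 db0 B0.
Qed.

Lemma sum_card_kgraphs_edge_at d v :
  (\sum_(B : {set 'I_n} | (B \subset ~: [set v]) && (#|B| == (k - 1)%N))
     #|[set G in kgraphs k d | v |: B \in G]|)%:R = (Ncount k d)%:R * (d v)%:~R :> rat.
Proof.
rewrite -(double_count _ _ (fun G B => v |: B \in G)) -sum_deg_kgraphs.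
by congr _%:R; apply: eq_bigr => G /kgraphs_kgraph kG; rewrite deg_link.
Qed.

End KGraphs.

Section Fill.
Variables (n : nat) (B : {set 'I_n}).
Implicit Types (s t : seq 'I_n).

Lemma size_fill s t : size (fill B s t) = size s.
Proof.
elim: s t => [|a s IH] [|b t] //=; case: (a \in B) => /=; by rewrite IH.
Qed.

Lemma mem_fill s t : {subset fill B s t <= s ++ t}.
Proof.
elim: s t => [|a s IH] t x //=.
case: (a \in B) t => [|] [|b t] /=; rewrite inE => /orP[/eqP-> | /IH];
by rewrite ?(inE, mem_cat, eqxx, orbT) // => /orP[] ->; rewrite ?orbT.
Qed.

Lemma fill_uniq s t : uniq s -> uniq t -> [disjoint s & t] -> uniq (fill B s t).
Proof.
elim: s t => [|a s IH] t //= /andP[a_s us] ut; rewrite disjoint_cons => /andP[a_t dst].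
have notin_fill x u : x \notin s ++ u -> x \notin fill B s u by apply: contra; apply: mem_fill.
case: (a \in B) => /=; first by rewrite notin_fill ?IH // mem_cat negb_or a_s.
case: t ut a_t dst => [|b t] /= ut a_t dst; first by rewrite notin_fill ?IH // cats0.
move: ut dst; rewrite disjoint_sym disjoint_cons => /andP[b_t ut] /andP[b_s dts].
by rewrite notin_fill ?IH ?mem_cat ?negb_or ?b_s // disjoint_sym.
Qed.

Lemma nth_fill x0 s t i : (i < size s)%N ->
  nth x0 (fill B s t) i = nth x0 s i \/ nth x0 (fill B s t) i \in t.
Proof.
elim: s t i => [|a s IH] t [|i] //= i_lt.
  by case: (a \in B) t => [|] [|b t]; [left | left | left | right; rewrite mem_head].
case: (a \in B) t => [|] [|b t] /=; try exact: IH.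
by case: (IH t i i_lt) => [|b_t]; [left | right; rewrite inE b_t orbT].
Qed.

Lemma fill_subset s t : {subset t <= B} -> (count [predC B] s <= size t)%N ->
  {subset fill B s t <= B}.
Proof.
elim: s t => [|a s IH] t //= tB; case aB: (a \in B) => /=.
  by move=> cnt x; rewrite inE => /orP[/eqP-> // | ]; apply: IH.
case: t tB => [|b t] //= tB; rewrite add1n ltnS => cnt x; rewrite inE.
case/orP => [/eqP-> | ]; first by rewrite tB ?mem_head.
by apply: (IH t _ cnt) => y y_t; rewrite tB // inE y_t orbT.
Qed.

End Fill.

Section ConsistentOrdering.
Variables (n : nat) (A B : {set 'I_n}).

Let fresh := sort_ord (enum (B :\: A)).

Lemma aord_uniq : uniq (aord A).
Proof. by rewrite /aord /sort_ord sort_uniq enum_uniq. Qed.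

Lemma mem_aord : aord A =i A.
Proof. by move=> x; rewrite /aord /sort_ord mem_sort mem_enum. Qed.

Lemma size_aord : size (aord A) = #|A|.
Proof. by rewrite /aord /sort_ord size_sort cardE. Qed.

Lemma mem_fresh : fresh =i B :\: A.
Proof. by move=> x; rewrite /fresh /sort_ord mem_sort mem_enum. Qed.

Lemma size_bord : size (bord A B) = #|A|.
Proof. by rewrite /bord size_fill size_aord. Qed.

Lemma bord_uniq : uniq (bord A B).
Proof.
apply: fill_uniq; rewrite ?aord_uniq ?sort_uniq ?enum_uniq //.
rewrite disjoint_has; apply/hasPn => x; rewrite mem_aord => xA.
by rewrite /= -/fresh mem_fresh inE xA.
Qed.

Lemma index_bord :
  {in bord A B, forall x, x \in aord A -> index x (bord A B) = index x (aord A)}.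
Proof.
move=> x xb xa; have i_lt : (index x (bord A B) < size (aord A))%N.
  by rewrite size_aord -size_bord index_mem.
case: (@nth_fill n B x (aord A) fresh _ i_lt); rewrite -/(bord A B) nth_index //.
  by move=> {2}->; rewrite index_uniq ?aord_uniq.
by rewrite mem_fresh !inE -mem_aord xa.
Qed.

Lemma set_aord : [set x in aord A] = A.
Proof. by apply/setP => x; rewrite inE mem_aord. Qed.

Lemma set_bord : #|A| = #|B| -> [set x in bord A B] = B.
Proof.
move=> AB; apply/eqP; rewrite eqEcard cardsE (card_uniqP bord_uniq) size_bord AB leqnn andbT.
have fresh_B : {subset fresh <= B} by move=> y; rewrite mem_fresh => /setDP[].
have count_fresh : (count [predC B] (aord A) <= size fresh)%N.
  rewrite /aord /sort_ord count_sort -size_filter -(card_uniqP (filter_uniq _ (enum_uniq _))).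
  rewrite /fresh /sort_ord size_sort -cardE (eq_card (B := A :\: B)) => [|y].
    by rewrite !cardsD AB setIC.
  by rewrite mem_filter mem_enum !inE andbC.
by apply/subsetP => x; rewrite inE; apply: fill_subset.
Qed.

Lemma cset0 : cset A B 0 = A.
Proof. by rewrite /cset take0 drop0 set_aord. Qed.

Lemma cset_last : #|A| = #|B| -> cset A B #|A| = B.
Proof.
move=> AB; rewrite /cset take_oversize ?size_bord // -size_aord drop_size cats0.
exact: set_bord.
Qed.

End ConsistentOrdering.

Section Telescope.
Variables (n k : nat) (d : 'I_n -> int) (sa sb : seq 'I_n).
Hypotheses (size_sb : size sb = size sa) (sa_uniq : uniq sa) (sb_uniq : uniq sb).
Hypothesis consistent : {in sb, forall x, x \in sa -> index x sb = index x sa}.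

Lemma Rab_step x0 i : (i < size sa)%N ->
  Rab k (dminus d [set x in take i sb ++ drop i.+1 sa]) (nth x0 sb i) (nth x0 sa i) =
  (Ncount k (dminus d [set x in take i.+1 sb ++ drop i.+1 sa]))%:R /
  (Ncount k (dminus d [set x in take i sb ++ drop i sa]))%:R.
Proof.
move=> ia_lt; have ib_lt : (i < size sb)%N by rewrite size_sb.
set b := nth x0 sb i; set a := nth x0 sa i.
have ib : index b sb = i := index_uniq x0 ib_lt sb_uniq.
have ia : index a sa = i := index_uniq x0 ia_lt sa_uniq.
have b_take : b \notin take i sb by rewrite in_take ?mem_nth // ib ltnn.
have a_drop : a \notin drop i.+1 sa.
  by apply/negP => /(leq_index_drop sa_uniq); rewrite ia ltnn.
have b_drop : b \notin drop i.+1 sa.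
  apply/negP => bd; have := leq_index_drop sa_uniq bd.
  by rewrite -consistent ?mem_nth ?(mem_drop bd) // ib ltnn.
have a_take : a \notin take i sb.
  apply/negP => a_t; have a_sb := mem_take a_t; move: a_t.
  by rewrite in_take // consistent ?mem_nth // ia ltnn.
rewrite /Rab (take_nth x0 ib_lt) (drop_nth x0 ia_lt) -/a -/b.
rewrite !Ncount_dminusD; last 2 first.
- by rewrite disjoint_sym disjoints1 inE mem_cat negb_or a_take a_drop.
- by rewrite disjoint_sym disjoints1 inE mem_cat negb_or b_take b_drop.
congr (_%:R / _%:R); congr (Ncount k (dminus d _)); apply/setP => x;
  rewrite !inE !mem_cat ?mem_rcons !inE.
- by rewrite orbC orbA.
- by rewrite orbAC orbA.
Qed.

Lemma prod_Rab_telescope :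
  (forall j, (j <= size sa)%N -> kgraphical k (dminus d [set x in take j sb ++ drop j sa])) ->
  \prod_(p <- zip (iota 0 (size sa)) (zip sb sa))
     Rab k (dminus d [set x in take p.1 sb ++ drop p.1.+1 sa]) p.2.1 p.2.2 =
  (Ncount k (dminus d [set x in sb]))%:R / (Ncount k (dminus d [set x in sa]))%:R.
Proof.
move=> gk; pose f j := (Ncount k (dminus d [set x in take j sb ++ drop j sa]))%:R : rat.
have f0 j : (j <= size sa)%N -> f j != 0 by move/gk; rewrite pnatr_eq0 -lt0n.
have -> : [set x in sb] = [set x in take (size sa) sb ++ drop (size sa) sa].
  by rewrite take_oversize ?size_sb // drop_size cats0.
have -> : [set x in sa] = [set x in take 0 sb ++ drop 0 sa] by rewrite take0 drop0.
rewrite -/(f 0%N) -/(f (size sa)).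
case: (posnP (size sa)) => [sa0 | sa_gt0].
  have sb0 : sb = [::] by apply: size0nil; rewrite size_sb.
  by rewrite sa0 sb0 (size0nil sa0) big_nil divff ?f0 ?sa0.
have [x0 _] : exists x0, x0 \in sa by case: sa sa_gt0 => // x0 s _; exists x0; rewrite mem_head.
rewrite (big_nth (0%N, (x0, x0))) !size_zip size_iota size_sb !minnn.
rewrite (telescope_prodr_eq (fun j => (f j)^-1)) ?invrK 1?mulrC //.
- by move=> j /andP[_ j_lt]; rewrite unitfE invr_eq0 f0 // ltnW.
move=> j /andP[_ j_lt].
rewrite nth_zip ?size_iota ?size_zip ?size_sb ?minnn // nth_iota // nth_zip //=.
by rewrite Rab_step // invrK mulrC.
Qed.

End Telescope.

Lemma RBA_telescope n k d (A B : {set 'I_n}) : #|A| = #|B| ->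
  (forall j, (j <= #|A|)%N -> kgraphical k (dminus d (cset A B j))) ->
  RBA k d B A = (Ncount k (dminus d B))%:R / (Ncount k (dminus d A))%:R.
Proof.
move=> AB gk; rewrite /RBA prod_Rab_telescope ?set_bord ?set_aord ?aord_uniq ?bord_uniq //.
- by rewrite size_bord size_aord.
- exact: index_bord.
- by rewrite size_aord.
Qed.

Lemma RBA_Pedge_ratio n k d (A B : {set 'I_n}) v : (0 < k)%N ->
  #|A| = (k - 1)%N -> #|B| = (k - 1)%N -> v \notin A -> v \notin B ->
  (forall j, (j <= k - 1)%N -> kgraphical k (dminus (dminus d [set v]) (cset A B j))) ->
  #|[set G in kgraphs k d | v |: A \in G]|%:R != 0 :> rat ->
  RBA k (dminus d [set v]) B A *
    ((1 - Pedge k (dminus d (v |: B)) (v |: B)) / (1 - Pedge k (dminus d (v |: A)) (v |: A))) =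
  #|[set G in kgraphs k d | v |: B \in G]|%:R / #|[set G in kgraphs k d | v |: A \in G]|%:R.
Proof.
move=> k_gt0 hA hB vA vB gk cA0; have AB : #|A| = #|B| by rewrite hA hB.
have hvA : #|v |: A| = k by rewrite cardsU1 vA hA; lia.
have hvB : #|v |: B| = k by rewrite cardsU1 vB hB; lia.
have gA : kgraphical k (dminus d (v |: A)).
  by rewrite /kgraphical -Ncount_dminusD ?disjoints1 // -[in dminus _ A](cset0 A B); apply: gk.
have gB : kgraphical k (dminus d (v |: B)).
  by rewrite /kgraphical -Ncount_dminusD ?disjoints1 // -(cset_last AB); apply: gk; rewrite hA.
rewrite RBA_telescope // => [|j]; last by rewrite hA; apply: gk.
rewrite !Ncount_dminusD ?disjoints1 // !one_sub_Pedge_dminus //.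
have NA0 : (Ncount k (dminus d (v |: A)))%:R != 0 :> rat by rewrite pnatr_eq0 -lt0n.
have NB0 : (Ncount k (dminus d (v |: B)))%:R != 0 :> rat by rewrite pnatr_eq0 -lt0n.
by field; rewrite NA0 NB0 cA0.
Qed.

Lemma Pedge_RBA n k d (A : {set 'I_n}) v : (0 < k)%N ->
  #|A| = (k - 1)%N -> v \notin A -> 0 < Pedge k d (v |: A) ->
  (forall B : {set 'I_n}, B \subset ~: [set v] -> #|B| = (k - 1)%N ->
     forall j, (j <= k - 1)%N -> kgraphical k (dminus (dminus d [set v]) (cset A B j))) ->
  Pedge k d (v |: A) =
    (d v)%:~R *
    (\sum_(B : {set 'I_n} | (B \subset ~: [set v]) && (#|B| == (k - 1)%N))
        RBA k (dminus d [set v]) B A *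
        ((1 - Pedge k (dminus d (v |: B)) (v |: B)) /
         (1 - Pedge k (dminus d (v |: A)) (v |: A))))^-1.
Proof.
move=> k_gt0 hA vA hP gk; move: hP; rewrite /Pedge.
set cA := #|[set G in kgraphs k d | v |: A \in G]|; set N := Ncount k d => hP.
have N0 : N%:R != 0 :> rat by apply: contraTneq hP => ->; rewrite invr0 mulr0 ltxx.
have cA0 : cA%:R != 0 :> rat by apply: contraTneq hP => ->; rewrite mul0r ltxx.
have [G] : exists G, G \in [set G in kgraphs k d | v |: A \in G].
  by apply/card_gt0P; rewrite lt0n -(pnatr_eq0 rat).
rewrite inE => /andP[GX vAG]; have dv0 : (d v)%:~R != 0 :> rat.
  by rewrite intr_eq0 gt_eqF // (kgraphs_deg_gt0 GX vAG) ?setU11.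
rewrite (eq_bigr (fun B => #|[set G in kgraphs k d | v |: B \in G]|%:R / cA%:R)).
  by rewrite -mulr_suml -natr_sum sum_card_kgraphs_edge_at; field; rewrite N0 cA0 dv0.
move=> B /andP[Bv /eqP hB]; apply: RBA_Pedge_ratio => //; last exact: gk.
by move: Bv; rewrite subsetC sub1set inE.
Qed.

Theorem lemma3p2 (n k : nat) (d : 'I_n -> int) :
  (2 <= k <= n)%N ->
  (* (a) *)
  (forall a b : 'I_n,
      kgraphical k (dminus d [set a]) -> kgraphical k (dminus d [set b]) ->
      Bq k d a b b a (dminus d [set a]) < 1 ->
      Rab k d a b =
        (d a)%:~R / (d b)%:~R *
        ((1 - Bq k d a b a b (dminus d [set b])) /
         (1 - Bq k d a b b a (dminus d [set a]))))
  /\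
  (* (b) *)
  (forall (A : {set 'I_n}) (v : 'I_n),
      #|A| = (k - 1)%N -> v \notin A ->
      0 < Pedge k d (v |: A) ->
      (forall B : {set 'I_n}, B \subset ~: [set v] -> #|B| = (k - 1)%N ->
         forall j : nat, (j <= k - 1)%N ->
           kgraphical k (dminus (dminus d [set v]) (cset A B j))) ->
      Pedge k d (v |: A) =
        (d v)%:~R *
        (\sum_(B : {set 'I_n} | (B \subset ~: [set v]) && (#|B| == (k - 1)%N))
            RBA k (dminus d [set v]) B A *
            ((1 - Pedge k (dminus d (v |: B)) (v |: B)) /
             (1 - Pedge k (dminus d (v |: A)) (v |: A))))^-1)
  /\
  (* (c) *)
  (forall (K : {set 'I_n}) (a b : 'I_n),
      #|K| = (k - 1)%N -> a \notin K -> b \notin K -> a != b ->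
      kgraphical k d -> kgraphical k (dminus d (a |: K)) ->
      Pedge k (dminus d (a |: K)) (a |: K) < 1 ->
      Ypair k d a K b =
        Pedge k d (a |: K) / (1 - Pedge k (dminus d (a |: K)) (a |: K)) *
        (Pedge k (dminus d (a |: K)) (b |: K) - Ypair k (dminus d (a |: K)) a K b)).
Proof.
move=> /andP[k_ge2 _]; have k_gt0 : (0 < k)%N by apply: leq_trans k_ge2.
split; [|split].
- by move=> a b; apply: Rab_Bq.
- by move=> A v; apply: Pedge_RBA.
- by move=> K a b; apply: Ypair_recurrence.
Qed.
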